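(* Let $(M_i)_{i\in I}$ be a family of sofic monoids (indexed by an arbitrary set $I$). Then the product monoid $\prod_{i\in I} M_i$ (with componentwise multiplication) is sofic.
   Context: For a non-empty finite set $X$, $\mathrm{Map}(X)$ is the monoid of all maps $X\to X$ under composition (identity $\mathrm{Id}_X$) with the Hamming metric $d_X(f,g)=|\{x\in X : f(x)\ne g(x)\}|/|X|$. For a monoid $M$, finite $K\subset M$ and $\varepsilon,\alpha>0$, a map $\varphi\colon M\to\mathrm{Map}(X)$ is a $(K,\varepsilon)$-morphism if $d_X(\varphi(k_1k_2),\varphi(k_1)\varphi(k_2))\le\varepsilon$ for all $k_1,k_2\in K$ and $d_X(\varphi(1_M),\mathrm{Id}_X)\le\varepsilon$; it is $(K,\alpha)$-injective if $d_X(\varphi(k_1),\varphi(k_2))\ge\alpha$ for all distinct $k_1,k_2\in K$. $M$ is sofic if for every finite $K\subset M$ and every $\varepsilon>0$ there exist a non-empty finite set $X$ and a $(K,1-\varepsilon)$-injective $(K,\varepsilon)$-morphism $\varphi\colon M\to\mathrm{Map}(X)$. *)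

From mathcomp Require Import all_boot.
From Stdlib Require Import Reals FunctionalExtensionality.

Set Implicit Arguments.
Unset Strict Implicit.
Unset Printing Implicit Defensive.

Record monoid := Monoid {
  mcarrier :> Type;
  mmul : mcarrier -> mcarrier -> mcarrier;
  mone : mcarrier;
  mmulA : forall x y z, mmul x (mmul y z) = mmul (mmul x y) z;
  mmul1l : forall x, mmul mone x = x;
  mmul1r : forall x, mmul x mone = x
}.

Section Product.
Variables (I : Type) (M : I -> monoid).
Definition prod_carrier := forall i : I, M i.
Definition prod_mul (f g : prod_carrier) : prod_carrier := fun i => mmul (f i) (g i).
Definition prod_one : prod_carrier := fun i => mone (M i).
Lemma prod_mulA : forall x y z, prod_mul x (prod_mul y z) = prod_mul (prod_mul x y) z.
Proof. by move=> x y z; apply: functional_extensionality_dep => i; apply: mmulA. Qed.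
Lemma prod_mul1l : forall x, prod_mul prod_one x = x.
Proof. by move=> x; apply: functional_extensionality_dep => i; apply: mmul1l. Qed.
Lemma prod_mul1r : forall x, prod_mul x prod_one = x.
Proof. by move=> x; apply: functional_extensionality_dep => i; apply: mmul1r. Qed.
Definition prod_monoid : monoid :=
  @Monoid prod_carrier prod_mul prod_one prod_mulA prod_mul1l prod_mul1r.
End Product.

Definition hamming (X : finType) (f g : X -> X) : R :=
  (INR #|[pred x | f x != g x]| / INR #|X|)%R.

(* (K, eps)-morphism; K a finite subset of M given as a list
   (membership via List.In, since M carries no decidable equality). *)
Definition is_morphism (M : monoid) (X : finType) (K : seq M) (eps : R)
    (phi : M -> X -> X) : Prop :=
  (forall k1 k2, List.In k1 K -> List.In k2 K ->
     (hamming (phi (mmul k1 k2)) (fun x => phi k1 (phi k2 x)) <= eps)%R) /\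
  (hamming (phi (mone M)) (fun x : X => x) <= eps)%R.

Definition is_injective (M : monoid) (X : finType) (K : seq M) (alpha : R)
    (phi : M -> X -> X) : Prop :=
  forall k1 k2, List.In k1 K -> List.In k2 K -> k1 <> k2 ->
    (alpha <= hamming (phi k1) (phi k2))%R.

Definition sofic (M : monoid) : Prop :=
  forall (K : seq M) (eps : R), (0 < eps)%R ->
    exists (X : finType) (phi : M -> X -> X),
      (0 < #|X|)%N /\ is_morphism K eps phi /\ is_injective K (1 - eps) phi.

From Stdlib Require Import Reals Lra Psatz Classical FunctionalExtensionality.
From mathcomp Require Import all_boot.

Set Implicit Arguments.
Unset Strict Implicit.
Unset Printing Implicit Defensive.
Open Scope R_scope.

(* A finite subset K of the product is separated by finitely many coordinates
   J.  Approximating each factor M_j (j in J) on the projection of K with error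
   d and taking the product of the finite sets, Hamming distances of product
   maps are at most the sum and at least each of the distances of the factors.
   Hence the product map is a (K, |J| d)-morphism, and it is
   (K, 1 - d)-injective because two distinct elements of K differ at some
   j in J.  Choosing d = eps / (|J| + 1) concludes. *)

Definition agreement (X : finType) (f g : X -> X) : R :=
  INR #|[pred x | f x == g x]| / INR #|X|.

Lemma hamming_agreement (X : finType) (f g : X -> X) : (0 < #|X|)%N ->
  hamming f g = 1 - agreement f g.
Proof.
move=> X_gt0; rewrite /hamming /agreement.
have card_split : (#|[pred x | f x == g x]| + #|[pred x | f x != g x]|)%N = #|X|.
  by rewrite -(cardC [pred x | f x == g x]).
have cardX_neq0 : INR #|X| <> 0 by apply/not_0_INR/eqP; rewrite -lt0n.
by rewrite -card_split plus_INR in cardX_neq0 *; field.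
Qed.

Lemma hamming_refl (X : finType) (f : X -> X) : hamming f f = 0.
Proof.
rewrite /hamming (@eq_card0 _ [pred x | f x != f x]) ?Rdiv_0_l // => x.
by rewrite !inE eqxx.
Qed.

Lemma agreement_bounds (X : finType) (f g : X -> X) :
  0 <= agreement f g <= 1.
Proof.
rewrite /agreement; have [->|X_gt0] := posnP #|X|.
  by rewrite /= Rdiv_0_r; lra.
have cardX_gt0 : 0 < INR #|X| by apply: lt_0_INR; apply/ltP.
have card_le : INR #|[pred x | f x == g x]| <= INR #|X|.
  by apply: le_INR; apply/leP; apply: max_card.
have inv_gt0 := Rinv_0_lt_compat _ cardX_gt0.
split; first by apply: Rmult_le_pos; [apply: pos_INR | lra].
apply: (Rmult_le_reg_r (INR #|X|)) => //.
by rewrite Rmult_assoc Rinv_l; lra.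
Qed.

Definition prod_map (X1 X2 : Type) (f1 : X1 -> X1) (f2 : X2 -> X2) (p : X1 * X2) :=
  (f1 p.1, f2 p.2).

Lemma card_agree_prod_map (X1 X2 : finType) (f1 g1 : X1 -> X1) (f2 g2 : X2 -> X2) :
  #|[pred p | prod_map f1 f2 p == prod_map g1 g2 p]| =
  (#|[pred x | f1 x == g1 x]| * #|[pred x | f2 x == g2 x]|)%N.
Proof.
transitivity #|setX [set x | f1 x == g1 x] [set x | f2 x == g2 x]|.
  by apply: eq_card => -[a b]; rewrite !inE xpair_eqE.
by rewrite cardsX; congr muln; apply: eq_card => x; rewrite !inE.
Qed.

Lemma agreement_prod_map (X1 X2 : finType) (f1 g1 : X1 -> X1) (f2 g2 : X2 -> X2) :
  (0 < #|X1|)%N -> (0 < #|X2|)%N ->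
  agreement (prod_map f1 f2) (prod_map g1 g2) = agreement f1 g1 * agreement f2 g2.
Proof.
move=> X1_gt0 X2_gt0.
have cardX1_gt0 : 0 < INR #|X1| by apply: lt_0_INR; apply/ltP.
have cardX2_gt0 : 0 < INR #|X2| by apply: lt_0_INR; apply/ltP.
rewrite /agreement card_agree_prod_map card_prod !mult_INR; field; lra.
Qed.

Section ProdMapHamming.
Variables (X1 X2 : finType) (f1 g1 : X1 -> X1) (f2 g2 : X2 -> X2).
Hypotheses (X1_gt0 : (0 < #|X1|)%N) (X2_gt0 : (0 < #|X2|)%N).

Let prod_X_gt0 : (0 < #|{: X1 * X2}|)%N.
Proof. by rewrite card_prod muln_gt0 X1_gt0 X2_gt0. Qed.

Let hamming_prod_map :
  hamming (prod_map f1 f2) (prod_map g1 g2) =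
  1 - agreement f1 g1 * agreement f2 g2.
Proof. by rewrite hamming_agreement // agreement_prod_map. Qed.

Lemma hamming_prod_map_le :
  hamming (prod_map f1 f2) (prod_map g1 g2) <= hamming f1 g1 + hamming f2 g2.
Proof.
rewrite hamming_prod_map !hamming_agreement //.
have := agreement_bounds f1 g1; have := agreement_bounds f2 g2; nra.
Qed.

Lemma hamming_prod_map_ge_l :
  hamming f1 g1 <= hamming (prod_map f1 f2) (prod_map g1 g2).
Proof.
rewrite hamming_prod_map hamming_agreement //.
have := agreement_bounds f1 g1; have := agreement_bounds f2 g2; nra.
Qed.

Lemma hamming_prod_map_ge_r :
  hamming f2 g2 <= hamming (prod_map f1 f2) (prod_map g1 g2).
Proof.
rewrite hamming_prod_map hamming_agreement //.
have := agreement_bounds f1 g1; have := agreement_bounds f2 g2; nra.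
Qed.

End ProdMapHamming.

Lemma is_morphism_prod_map (A : monoid) (K : seq A) (X1 X2 : finType)
    (eps1 eps2 : R) (phi1 : A -> X1 -> X1) (phi2 : A -> X2 -> X2) :
  (0 < #|X1|)%N -> (0 < #|X2|)%N ->
  is_morphism K eps1 phi1 -> is_morphism K eps2 phi2 ->
  is_morphism K (eps1 + eps2) (fun a => prod_map (phi1 a) (phi2 a)).
Proof.
move=> X1_gt0 X2_gt0 [phi1_mul phi1_one] [phi2_mul phi2_one]; split.
  move=> a b Ka Kb.
  apply: (Rle_trans _ _ _ (hamming_prod_map_le (phi1 (mmul a b))
    (fun x => phi1 a (phi1 b x)) (phi2 (mmul a b)) (fun x => phi2 a (phi2 b x))
    X1_gt0 X2_gt0)).
  exact: Rplus_le_compat (phi1_mul _ _ Ka Kb) (phi2_mul _ _ Ka Kb).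
apply: (Rle_trans _ _ _ (hamming_prod_map_le (phi1 (mone A)) id (phi2 (mone A)) id
  X1_gt0 X2_gt0)).
exact: Rplus_le_compat phi1_one phi2_one.
Qed.

Section SeparatingIndices.
Variables (I : Type) (T : I -> Type).

Lemma exists_separating_indices1 (f : forall i, T i) (L : seq (forall i, T i)) :
  exists J : seq I, forall g, List.In g L -> f <> g ->
    exists2 j, List.In j J & f j <> g j.
Proof.
elim: L => [|g L [J sepJ]]; first by exists [::].
have [<-|f_neq_g] := classic (f = g).
  by exists J => h [<-|Lh] //; apply: sepJ.
have [i fi_neq_gi] : exists i, f i <> g i.
  by apply: not_all_ex_not => fg_eq; apply/f_neq_g/functional_extensionality_dep.
exists (i :: J) => h [<-|Lh] f_neq_h; first by exists i; first left.
by have [j Jj] := sepJ h Lh f_neq_h; exists j; first right.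
Qed.

Lemma exists_separating_indices (L1 L2 : seq (forall i, T i)) :
  exists J : seq I, forall f g, List.In f L1 -> List.In g L2 -> f <> g ->
    exists2 j, List.In j J & f j <> g j.
Proof.
elim: L1 => [|f L1 [J sepJ]]; first by exists [::].
have [Jf sepJf] := exists_separating_indices1 f L2.
exists (J ++ Jf)%list => f' g [<-|L1f'] L2g f'_neq_g.
  by have [j Jj] := sepJf g L2g f'_neq_g; exists j => //; apply: List.in_or_app; right.
by have [j Jj] := sepJ f' g L1f' L2g f'_neq_g; exists j => //; apply: List.in_or_app; left.
Qed.

End SeparatingIndices.

Section ProductApproximation.
Variables (I : Type) (M : I -> monoid).
Hypothesis M_sofic : forall i, sofic (M i).

Lemma is_morphism_proj (j : I) (K : seq (prod_monoid M)) (X : finType) (eps : R)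
    (phi : M j -> X -> X) :
  is_morphism [seq k j | k <- K] eps phi ->
  is_morphism K eps (fun k : prod_monoid M => phi (k j)).
Proof.
move=> [phi_mul phi_one]; split=> // k1 k2 Kk1 Kk2.
by apply: phi_mul; apply: List.in_map.
Qed.

Lemma sofic_prod_approximation (K : seq (prod_monoid M)) (d : R) (J : seq I) :
  0 < d ->
  exists (X : finType) (phi : prod_monoid M -> X -> X), (0 < #|X|)%N /\
    is_morphism K (INR (size J) * d) phi /\
    (forall k1 k2 j, List.In k1 K -> List.In k2 K -> List.In j J -> k1 j <> k2 j ->
       1 - d <= hamming (phi k1) (phi k2)).
Proof.
move=> d_gt0; elim: J => [|j J [X [phi [X_gt0 [phi_morph phi_sep]]]]].
  exists unit, (fun _ x => x); rewrite card_unit /=.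
  by do !split => // *; rewrite hamming_refl; lra.
have [Xj [phij [Xj_gt0 [phij_morph phij_inj]]]] :=
  @M_sofic j [seq k j | k <- K] d d_gt0.
exists (Xj * X)%type, (fun k => prod_map (phij (k j)) (phi k)).
rewrite card_prod muln_gt0 Xj_gt0 X_gt0 [size _]/= S_INR Rmult_plus_distr_r Rmult_1_l.
split=> //; split.
  by rewrite Rplus_comm; apply: is_morphism_prod_map => //; apply: is_morphism_proj.
move=> k1 k2 i Kk1 Kk2 [<-|Ji] k1i_neq_k2i.
  apply: (Rle_trans _ _ _ _ (hamming_prod_map_ge_l _ _ _ _ Xj_gt0 X_gt0)).
  by apply: phij_inj => //; apply: List.in_map.
apply: (Rle_trans _ _ _ _ (hamming_prod_map_ge_r _ _ _ _ Xj_gt0 X_gt0)).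
exact: phi_sep Kk1 Kk2 Ji k1i_neq_k2i.
Qed.

End ProductApproximation.

Theorem proposition3p7 (I : Type) (M : I -> monoid) :
  (forall i : I, sofic (M i)) -> sofic (prod_monoid M).
Proof.
move=> M_sofic K eps eps_gt0.
have [J sepJ] := exists_separating_indices K K.
have size_ge0 := pos_INR (size J).
set d := eps / (INR (size J) + 1).
have d_gt0 : 0 < d by apply: Rdiv_lt_0_compat; lra.
have [err_le d_le] : INR (size J) * d <= eps /\ d <= eps.
  have eps_eq : eps = (INR (size J) + 1) * d by rewrite /d; field; lra.
  by split; nra.
have [X [phi [X_gt0 [[phi_mul phi_one] phi_sep]]]] :=
  sofic_prod_approximation M_sofic K J d_gt0.
exists X, phi; split; [done | split; [split|]].
- by move=> k1 k2 Kk1 Kk2; apply: (Rle_trans _ _ _ (phi_mul _ _ Kk1 Kk2) err_le).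
- exact: (Rle_trans _ _ _ phi_one err_le).
- move=> k1 k2 Kk1 Kk2 k1_neq_k2.
  have [j Jj k1j_neq_k2j] := sepJ k1 k2 Kk1 Kk2 k1_neq_k2.
  by apply: (Rle_trans _ _ _ _ (phi_sep _ _ _ Kk1 Kk2 Jj k1j_neq_k2j)); lra.
Qed.
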